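(* Let $M$ be an $\mathcal L$-atomic module and let $\mathcal L'=\bigcup_{i\in I}\mathcal L_i$ be a class of modules with $\mathcal L'\subseteq\langle\mathcal L\rangle$. If $M$ is strict $\mathcal L_i$-atomic for every $i\in I$, then $M$ is strict $\mathcal L'$-atomic.
   Context: $R$ is an associative ring with $1$; ''module'' means left $R$-module; $\mathcal L$ and all other classes are nonempty classes of modules. A pp (positive primitive) formula $\phi(\bar x)$ is an existentially quantified finite system of $R$-linear equations; $\phi(M)$ denotes the set of tuples of $M$ satisfying it. For a class $\mathcal L$ and pp formulas $\phi,\psi$ in the same free variables, $\phi\le_{\mathcal L}\psi$ means $\phi(L)\subseteq\psi(L)$ for all $L\in\mathcal L$. ${\rm pp}_M(\bar m)$ is the set of pp formulas satisfied by the tuple $\bar m$ in $M$. $\langle\mathcal L\rangle$ denotes the definable subcategory generated by $\mathcal L$, i.e. the class of all modules $N$ with $\phi(N)\subseteq\psi(N)$ whenever $\phi\le_{\mathcal L}\psi$. A module $M$ is $\mathcal L$-atomic if for every finite tuple $\bar m$ in $M$ there is $\phi\in{\rm pp}_M(\bar m)$ with $\phi\le_{\mathcal L}\psi$ for all $\psi\in{\rm pp}_M(\bar m)$. A pointed module $(M,\bar m)$ is an $\mathcal L$-free realization of a pp formula $\phi$ if $\bar m\in\phi(M)$ and for every $L\in\mathcal L$ and every $\bar c\in\phi(L)$ there is a homomorphism $M\to L$ sending $\bar m$ to $\bar c$ ($M$ need not be in $\mathcal L$). $M$ is strict $\mathcal L$-atomic if every finite tuple in $M$ is an $\mathcal L$-free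 realization of some pp formula. *)

From HB Require Import structures.
From mathcomp Require Import all_boot all_algebra.
Set Implicit Arguments. Unset Strict Implicit. Unset Printing Implicit Defensive.
Import GRing.Theory.
Local Open Scope ring_scope.

Section PP.
Variable R : pzRingType.

(* A pp formula in n free variables: exists k bound variables such that
   the system of m R-linear equations with coefficient matrix A
   (columns = n free variables followed by k bound variables) holds. *)
Record ppf (n : nat) := PPF {
  pp_k : nat;
  pp_m : nat;
  pp_A : 'M[R]_(pp_m, n + pp_k)
}.

Definition catv (M : lmodType R) n k (x : 'I_n -> M) (y : 'I_k -> M)
  (j : 'I_(n + k)) : M :=
  match split j with inl a => x a | inr b => y b end.

Definition pp_sat n (phi : ppf n) (M : lmodType R) (x : 'I_n -> M) : Prop :=
  exists y : 'I_(pp_k phi) -> M,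
    forall i : 'I_(pp_m phi),
      \sum_(j < n + pp_k phi) pp_A phi i j *: catv x y j = 0.

Definition mclass := lmodType R -> Prop.

Definition pp_le (L : mclass) n (phi psi : ppf n) : Prop :=
  forall N : lmodType R, L N -> forall x : 'I_n -> N, pp_sat phi x -> pp_sat psi x.

Definition defsub (L : mclass) : mclass := fun N =>
  forall n (phi psi : ppf n), pp_le L phi psi ->
    forall x : 'I_n -> N, pp_sat phi x -> pp_sat psi x.

Definition atomic (L : mclass) (M : lmodType R) : Prop :=
  forall n (m : 'I_n -> M), exists phi : ppf n,
    pp_sat phi m /\ forall psi : ppf n, pp_sat psi m -> pp_le L phi psi.

Definition free_real (L : mclass) n (phi : ppf n) (M : lmodType R)
  (m : 'I_n -> M) : Prop :=
  pp_sat phi m /\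
  forall N : lmodType R, L N -> forall c : 'I_n -> N, pp_sat phi c ->
    exists f : {linear M -> N}, forall i, f (m i) = c i.

Definition strict_atomic (L : mclass) (M : lmodType R) : Prop :=
  forall n (m : 'I_n -> M), exists phi : ppf n, free_real L phi m.

End PP.

From mathcomp Require Import all_boot all_algebra.

(* Fix a tuple m of M.  Since M is L-atomic, m satisfies a pp formula phi
   that L-implies every pp formula satisfied by m.  For each index i, m is
   an L_i-free realization of some psi_i; as m satisfies psi_i we get
   phi <=_L psi_i, hence phi <=_{L_i} psi_i because L_i lies inside the
   definable subcategory <L>.  An L_i-free realization of a formula is also
   an L_i-free realization of any formula it satisfies that L_i-implies
   it, so m is an L_i-free realization of phi for every i; and being a free
   realization for each L_i is the same as being one for their union. *)

Section FreeRealizations.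
Variable R : pzRingType.

Lemma pp_le_defsub (L L' : mclass R) (n : nat) (phi psi : ppf R n) :
  (forall N, L' N -> defsub L N) -> pp_le L phi psi -> pp_le L' phi psi.
Proof. by move=> sub_L'L le_phi_psi N /sub_L'L; apply. Qed.

Lemma free_real_weaken (L' : mclass R) (n : nat) (phi psi : ppf R n)
    (M : lmodType R) (m : 'I_n -> M) :
  free_real L' psi m -> pp_sat phi m -> pp_le L' phi psi ->
  free_real L' phi m.
Proof.
move=> [_ free_psi] sat_phi le_phi_psi; split=> // N L'N c sat_c.
exact: free_psi N L'N c (le_phi_psi N L'N c sat_c).
Qed.

Lemma free_real_union (I : Type) (Ls : I -> mclass R) (n : nat)
    (phi : ppf R n) (M : lmodType R) (m : 'I_n -> M) :
  pp_sat phi m -> (forall i, free_real (Ls i) phi m) ->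
  free_real (fun N => exists i, Ls i N) phi m.
Proof.
move=> sat_phi free_i; split=> // N [i LiN] c sat_c.
exact: (free_i i).2 N LiN c sat_c.
Qed.

End FreeRealizations.

Theorem lemma2p2 (R : pzRingType) (L : mclass R) (I : Type)
  (Ls : I -> mclass R) (M : lmodType R) :
  (exists N, L N) ->
  (forall i, exists N, Ls i N) ->
  atomic L M ->
  (forall N, (exists i, Ls i N) -> defsub L N) ->
  (forall i, strict_atomic (Ls i) M) ->
  strict_atomic (fun N => exists i, Ls i N) M.
Proof.
move=> _ _ atomic_M union_in_defsub strict_i n m.
have [phi [sat_phi phi_min]] := atomic_M n m.
exists phi; apply: free_real_union => // i.
have [psi free_psi] := strict_i i n m.
have Li_in_defsub N : Ls i N -> defsub L N.
  by move=> LiN; apply: union_in_defsub; exists i.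
have le_phi_psi : pp_le (Ls i) phi psi.
  exact: pp_le_defsub Li_in_defsub (phi_min psi free_psi.1).
exact: free_real_weaken free_psi sat_phi le_phi_psi.
Qed.
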